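(* Let $d<n$ be positive integers and let $r\in\{0,1\}$ with $d\equiv r \pmod 2$. For every family $\mathcal{A}\subset 2^{[n]}$ with $\mathrm{VC}(\mathcal{A}\triangle\mathcal{A})\le d$, we have $|\mathcal{A}|\le 2^r\binom{n-r}{\le \lfloor d/2\rfloor}$.
   Context: $[n]=\{1,\dots,n\}$. For $Y\subset[n]$, $Y$ is shattered by $\mathcal{F}\subset 2^{[n]}$ if $\{S\cap Y: S\in\mathcal{F}\}=2^Y$; $\mathrm{VC}(\mathcal{F})$ is the largest cardinality of a set shattered by $\mathcal{F}$. $\mathcal{A}\triangle\mathcal{A}=\{S\triangle T: S,T\in\mathcal{A}\}$, where $\triangle$ is symmetric difference. $\binom{m}{\le t}=\sum_{j=0}^{t}\binom{m}{j}$. *)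

(* Ground set [n] is modelled by 'I_n (indices 0..n-1). *)
From mathcomp Require Import all_boot.
Set Implicit Arguments. Unset Strict Implicit. Unset Printing Implicit Defensive.

Definition symd (T : finType) (S U : {set T}) : {set T} := (S :\: U) :|: (U :\: S).

Definition symd_fam (T : finType) (A : {set {set T}}) : {set {set T}} :=
  [set symd S U | S in A, U in A].

Definition shattered (T : finType) (F : {set {set T}}) (Y : {set T}) : bool :=
  [set S :&: Y | S in F] == powerset Y.

(* VC dimension: largest cardinality of a shattered set (0 if none is shattered,
   which only happens for the empty family). *)
Definition VC (T : finType) (F : {set {set T}}) : nat :=
  \max_(Y : {set T} | shattered F Y) #|Y|.

Definition binom_le (m t : nat) : nat := \sum_(0 <= j < t.+1) 'C(m, j).

From mathcomp Require Import all_boot zify.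
Set Implicit Arguments. Unset Strict Implicit. Unset Printing Implicit Defensive.

(* Down-shifts S |-> S :\ i preserve #|A| and create no new set shattered by A △ A, so A
   may be taken down-closed. In a down-closed family every union S :|: U is shattered by
   A △ A (write W = (W :&: (S :\: U)) △ (W :&: U)), hence #|S :|: U| <= d throughout A.
   What remains is Katona's bound for families with pairwise unions of size at most d,
   proved by induction on the ground set R: after shifting a point x onto the other points
   of R, the members avoiding x and the links S :\ x of the members through x live on
   R :\ x with union bounds d and d - 2, which yields the Pascal-type recursion of
   2^r * binom_le (#|R| - r) d./2. *)

Lemma measure_descent (X : Type) (P Q : X -> Prop) (mu : X -> nat) :
  (forall x, P x -> Q x \/ exists2 y, P y & mu y < mu x) ->
  forall x, P x -> exists2 y, P y & Q y.
Proof.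
move=> step x; have [k] := ubnP (mu x); elim: k x => // k IH x lt_x Px.
have [Qx | [y Py lt_y]] := step x Px; first by exists x.
exact: IH y (leq_trans lt_y lt_x) Py.
Qed.

Lemma binom_leS m t : binom_le m.+1 t.+1 = binom_le m t.+1 + binom_le m t.
Proof.
rewrite /binom_le big_nat_recl // [in RHS]big_nat_recl // !bin0.
rewrite (eq_bigr (fun j => 'C(m, j.+1) + 'C(m, j))) => [|j _]; last exact: binS.
by rewrite big_split /= addnA.
Qed.

Lemma binom_le_half t : 2 * binom_le t.*2.+1 t = 2 ^ t.*2.+1.
Proof.
have -> : 2 ^ t.*2.+1 = \sum_(0 <= j < t.*2.+2) 'C(t.*2.+1, j).
  by rewrite -[2]/(1 + 1) expnDn big_mkord; apply: eq_bigr => j _; rewrite !exp1n !muln1.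
have -> : t.*2.+2 = t.+1 + t.+1 by rewrite -addnn addnS.
rewrite (big_cat_nat _ (leq_addr _ _)) //= mul2n -addnn; congr (_ + _).
rewrite big_nat_rev (big_addn 0 _ t.+1) addnK.
apply: eq_big_nat => j /andP [_ lt_j]; rewrite -bin_sub; last by rewrite -addnn; lia.
by congr 'C(_, _); rewrite -addnn; lia.
Qed.

Definition katona_bound (m d : nat) : nat :=
  if odd d then 2 * binom_le m.-1 d./2 else binom_le m d./2.

Lemma katona_boundS m d :
  2 <= d -> d < m -> katona_bound m.+1 d = katona_bound m d + katona_bound m (d - 2).
Proof.
case: d => [|[|d]] // _ lt_dm; rewrite !subSS subn0 /katona_bound /= negbK.
case: m lt_dm => [|m] // lt_dm; case: ifP => _; last exact: binom_leS.
by case: m lt_dm => [|m] // _; rewrite -mulnDr /= binom_leS.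
Qed.

Lemma katona_bound_small m d : d < 2 -> katona_bound m d = d.+1.
Proof. by case: d => [|[|]] //; rewrite /katona_bound /binom_le /= big_nat1 bin0. Qed.

Lemma katona_bound_full m : katona_bound m.+1 m = 2 ^ m.
Proof.
rewrite /katona_bound -(odd_double_half m); case: (odd m); set t := m./2.
  by rewrite add1n /= odd_double uphalf_double binom_le_half.
rewrite /= add0n odd_double doubleK; apply/eqP.
by rewrite -(eqn_pmul2l (isT : 0 < 2)) -expnS binom_le_half.
Qed.

Lemma katona_boundE m d r :
  r <= 1 -> d = r %[mod 2] -> katona_bound m d = 2 ^ r * binom_le (m - r) d./2.
Proof.
rewrite /katona_bound modn2; case: r => [|[|]] // _; case: (odd d) => // _.
  by rewrite mul1n subn0.
by rewrite subn1.
Qed.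

Section Shattering.
Variable T : finType.
Implicit Types (D F : {set {set T}}) (S U W Y : {set T}).

Lemma in_symd S U y : (y \in symd S U) = (y \in S) (+) (y \in U).
Proof. by rewrite !inE; case: (y \in S); case: (y \in U). Qed.

Lemma symdC S U : symd S U = symd U S.
Proof. by apply/setP => y; rewrite !in_symd addbC. Qed.

Lemma symdIr S U Y : symd S U :&: Y = symd (S :&: Y) (U :&: Y).
Proof.
apply/setP => y; rewrite in_setI !in_symd !in_setI.
by case: (y \in S); case: (y \in U); case: (y \in Y).
Qed.

Lemma mem_symd_fam D S U : S \in D -> U \in D -> symd S U \in symd_fam D.
Proof. by move=> SD UD; apply/imset2P; exists S U. Qed.

Lemma shatteredP F Y :
  reflect (forall W, W \subset Y -> exists2 U, U \in F & U :&: Y = W) (shattered F Y).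
Proof.
apply: (iffP eqP) => [FY W sWY | FY].
  by have := sWY; rewrite -powersetE -FY => /imsetP[U UF ->]; exists U.
apply/setP => W; rewrite powersetE; apply/imsetP/idP => [[U _ ->]|]; first exact: subsetIr.
by case/FY => U UF <-; exists U.
Qed.

Lemma leq_VC F Y : shattered F Y -> #|Y| <= VC F.
Proof. exact: leq_bigmax_cond. Qed.

Definition down_closed D := forall S x, S \in D -> x \in S -> S :\ x \in D.

Lemma down_closed_sub D S U : down_closed D -> S \in D -> U \subset S -> U \in D.
Proof.
move=> downD SD sUS; have [k] := ubnP #|S :\: U|; elim: k S SD sUS => // k IH S SD sUS.
have [/eqP|[x xSU] lt_k] := set_0Vmem (S :\: U).
  by rewrite setD_eq0 => sSU; rewrite (_ : U = S) // ; apply/eqP; rewrite eqEsubset sUS.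
have [xU xS] : x \notin U /\ x \in S by move: xSU; rewrite inE => /andP.
apply: (IH (S :\ x)); first exact: downD.
  by apply/subsetP => y yU; rewrite !inE (subsetP sUS) // andbT; apply: contraTneq yU => ->.
by rewrite setDDl setUC -setDDl; move: lt_k; rewrite (cardsD1 x) xSU.
Qed.

Lemma shattered_setU D S U :
  down_closed D -> S \in D -> U \in D -> shattered (symd_fam D) (S :|: U).
Proof.
move=> downD SD UD; apply/shatteredP => W sW; exists W; last exact/setIidPl.
have -> : W = symd (W :&: (S :\: U)) (W :&: U).
  apply/setP => y; rewrite in_symd !inE; have := subsetP sW y; rewrite !inE.
  by case: (y \in W); case: (y \in S); case: (y \in U) => // /(_ isT).
by apply: mem_symd_fam; [apply: down_closed_sub downD SD _ | apply: down_closed_sub downD UD _];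
  rewrite ?subsetIr // subIset // subsetDl orbT.
Qed.

End Shattering.

Section DownShift.
Variables (T : finType) (i : T) (D : {set {set T}}).
Implicit Types (S U V W Y : {set T}).

Definition down_shift S := if (i \in S) && (S :\ i \notin D) then S :\ i else S.
Definition down_compress := [set down_shift S | S in D].

Lemma in_down_shift S y : y != i -> (y \in down_shift S) = (y \in S).
Proof. by move=> ne_yi; rewrite /down_shift; case: ifP; rewrite // !inE ne_yi. Qed.

Lemma down_shift_mem S : i \in down_shift S -> down_shift S = S /\ S :\ i \in D.
Proof.
rewrite /down_shift; case: ifP => [_|]; first by rewrite !inE eqxx.
by move/negbT; rewrite negb_and negbK => /orP[/negbTE -> | ->].
Qed.

Lemma down_shift_inj : {in D &, injective down_shift}.
Proof.
move=> S U SD UD; rewrite /down_shift.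
case: ifP => [/andP[iS S'D] | _]; case: ifP => [/andP[iU U'D] | _] //.
- move=> eSU; apply/setP => y; case: (eqVneq y i) => [-> | ne_yi]; first by rewrite iS iU.
  by move/setP/(_ y): eSU; rewrite !inE ne_yi.
- by move=> eSU; move: S'D; rewrite eSU UD.
- by move=> eSU; move: U'D; rewrite -eSU SD.
Qed.

Lemma card_down_compress : #|down_compress| = #|D|.
Proof. exact/card_in_imset/down_shift_inj. Qed.

Definition weight (F : {set {set T}}) := \sum_(S in F) #|S|.

Lemma weight_down_compress S :
  S \in D -> i \in S -> S :\ i \notin D -> weight down_compress < weight D.
Proof.
move=> SD iS S'D; rewrite /weight big_imset; last exact: down_shift_inj.
rewrite (bigD1 S) //= [in X in _ < X](bigD1 S) //= -addSn leq_add //.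
  by rewrite /down_shift iS S'D [in X in _ < X](cardsD1 i) iS.
apply: leq_sum => U _; apply: subset_leq_card.
by rewrite /down_shift; case: ifP => // _; exact: subD1set.
Qed.

(* Pairing [S] or [S :\ i] with [T0] realises either membership of [i], while off [i]
   the trace stays that of [symd S V]; so [i] can be dropped from the target trace. *)
Lemma symd_trace_toggle S V T0 Y W :
  S \in D -> S :\ i \in D -> T0 \in D -> i \in S -> i \notin V ->
  (forall y, y != i -> (y \in V) = (y \in T0)) ->
  symd S V :&: Y = i |: W -> W \subset Y ->
  exists2 U, U \in symd_fam D & U :&: Y = W.
Proof.
move=> SD S'D T0D iS iV eVT0 eY sWY.
have iY : i \in Y by move/setP/(_ i): eY; rewrite !inE eqxx => /andP[].
pose S' := if (i \in W) == (i \in T0) then S :\ i else S.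
exists (symd S' T0); first by apply: mem_symd_fam; rewrite // /S'; case: ifP.
apply/setP => y; move/setP/(_ y): eY; rewrite !in_setI !in_symd !in_setU1.
case: (eqVneq y i) => [-> _ | ne_yi]; first by rewrite iY andbT /S';
  case: ifP; rewrite ?inE ?eqxx iS; case: (i \in W); case: (i \in T0).
rewrite -eVT0 // /S' /= => <-; by case: ifP; rewrite // !inE ne_yi.
Qed.

Lemma shattered_down_compress Y :
  shattered (symd_fam down_compress) Y -> shattered (symd_fam D) Y.
Proof.
move/shatteredP => shY; apply/shatteredP => W sWY.
have trace W' : W' \subset Y -> exists S V,
    [/\ S \in D, V \in D & symd (down_shift S) (down_shift V) :&: Y = W'].
  by case/shY => _ /imset2P[_ _ /imsetP[S SD ->] /imsetP[V VD ->] ->] eW; exists S, V.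
have [iY | iY] := boolP (i \in Y); last first.
  have [S [V [SD VD <-]]] := trace W sWY; exists (symd S V); first exact: mem_symd_fam.
  rewrite !symdIr; congr symd; apply/setP => y; rewrite !inE;
    case: (boolP (y \in Y)) => yY; rewrite ?andbF ?andbT ?in_down_shift //;
    by apply: contraNneq iY => <-.
have [S [V [SD VD eY]]] : exists S V, [/\ S \in D, V \in D &
    symd (down_shift S) (down_shift V) :&: Y = i |: W].
  by apply: trace; rewrite subUset sub1set iY.
have := setU11 i W; rewrite -eY inE in_symd => /andP[].
case iS: (i \in down_shift S); case iV: (i \in down_shift V) => //= _ _.
  have [eS S'D] := down_shift_mem iS; rewrite eS in iS eY.
  by apply: symd_trace_toggle SD S'D VD iS (negbT iV) _ eY sWY => y; apply: in_down_shift.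
have [eV V'D] := down_shift_mem iV; rewrite eV in iV eY; rewrite symdC in eY.
by apply: symd_trace_toggle VD V'D SD iV (negbT iS) _ eY sWY => y; apply: in_down_shift.
Qed.

End DownShift.

Lemma down_closed_compression (T : finType) (A : {set {set T}}) :
  exists2 D : {set {set T}}, down_closed D /\ #|D| = #|A| &
    forall Y, shattered (symd_fam D) Y -> shattered (symd_fam A) Y.
Proof.
pose P (D : {set {set T}}) :=
  #|D| = #|A| /\ forall Y, shattered (symd_fam D) Y -> shattered (symd_fam A) Y.
have [D [cardD shD] downD] : exists2 D, P D & down_closed D.
  apply: (measure_descent (mu := @weight T)) => [D [cardD shD] | ]; last by split.
  have [downD | ] := boolP [forall S in D, forall x in S, S :\ x \in D].
    by left => S x SD; move/forall_inP/(_ S SD)/forall_inP: downD; apply.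
  case/forall_inPn => S SD /forall_inPn[x xS S'D]; right; exists (down_compress x D).
    by split => [|Y /shattered_down_compress]; [rewrite card_down_compress | apply: shD].
  exact: weight_down_compress SD xS S'D.
by exists D.
Qed.

Definition union_bounded (T : finType) (d : nat) (E : {set {set T}}) :=
  forall S U, S \in E -> U \in E -> #|S :|: U| <= d.

Lemma card_setU1D1 (T : finType) (A : {set T}) x i : x \in A -> #|i |: (A :\ x)| <= #|A|.
Proof. by move=> xA; rewrite cardsU1 [#|A|](cardsD1 x) xA leq_add2r leq_b1. Qed.

Section Shift.
Variables (T : finType) (x i : T) (E : {set {set T}}).
Implicit Types (R S U : {set T}).

Definition shiftable S := [&& x \in S, i \notin S & i |: (S :\ x) \notin E].
Definition shift S := if shiftable S then i |: (S :\ x) else S.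
Definition shift_fam := [set shift S | S in E].

Lemma shift_inj : {in E &, injective shift}.
Proof.
move=> S U SE UE; rewrite /shift.
case: ifP => [/and3P[xS iS S'E] | _]; case: ifP => [/and3P[xU iU U'E] | _] //.
- move=> eSU; apply/setP => y; move/setP/(_ y): eSU; rewrite !inE.
  case: (eqVneq y x) => [-> | _]; first by rewrite xS xU.
  by case: (eqVneq y i) => [-> | _]; rewrite ?(negbTE iS) ?(negbTE iU).
- by move=> eSU; move: S'E; rewrite eSU UE.
- by move=> eSU; move: U'E; rewrite -eSU SE.
Qed.

Lemma card_shift_fam : #|shift_fam| = #|E|.
Proof. exact/card_in_imset/shift_inj. Qed.

Lemma shift_fam_sub R : i \in R -> E \subset powerset R -> shift_fam \subset powerset R.
Proof.
move=> iR /subsetP sER; apply/subsetP => _ /imsetP[S SE ->].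
have := sER S SE; rewrite !powersetE /shift => sSR; case: ifP => // _.
by rewrite subUset sub1set iR (subset_trans (subD1set _ _)).
Qed.

Lemma shift_union_bounded d : union_bounded d E -> union_bounded d shift_fam.
Proof.
move=> bdE; suff bd_shifted S U : S \in E -> U \in E -> shiftable S -> #|shift S :|: shift U| <= d.
  move=> _ _ /imsetP[S SE ->] /imsetP[U UE ->].
  case cS: (shiftable S); first exact: bd_shifted.
  case cU: (shiftable U); first by rewrite setUC; apply: bd_shifted.
  by rewrite /shift cS cU; apply: bdE.
move=> SE UE cS; have /and3P[xS iS S'E] := cS; rewrite {1}/shift cS.
have via_shrink (V : {set T}) : V \subset i |: ((S :|: U) :\ x) -> #|i |: (S :\ x) :|: V| <= d.
  have xSU : x \in S :|: U by rewrite inE xS.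
  move=> sV; apply: leq_trans _ (bdE _ _ SE UE); apply: leq_trans (card_setU1D1 i xSU).
  by apply: subset_leq_card; rewrite subUset sV andbT setUS // setSD // subsetUl.
rewrite /shift; case: ifP => [_ | /negbT].
  by apply: via_shrink; rewrite setUS // setSD // subsetUr.
rewrite /shiftable; have [xU /= | xU] := boolP (x \in U); last first.
  move=> _; apply: via_shrink; apply/subsetP => y yU; rewrite !inE yU orbT andbT.
  by apply/orP; right; apply: contraNneq xU => <-.
have [iU _ | iU /= /negPn U'E] := boolP (i \in U).
  apply: leq_trans _ (bdE _ _ SE UE); apply: subset_leq_card.
  rewrite subUset subsetUr andbT subUset sub1set inE iU orbT.
  by rewrite (subset_trans (subD1set _ _)) // subsetUl.
rewrite (_ : _ :|: U = S :|: (i |: (U :\ x))); first exact: bdE.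
apply/setP => y; rewrite !inE; case: (eqVneq y x) => [-> | _]; first by rewrite xS xU orbT.
by case: (y == i); case: (y \in S).
Qed.

Lemma mem_shift S : x \in shift S -> x \in S.
Proof. by rewrite /shift; case: ifP => [/and3P[] | _]. Qed.

Lemma count_shift_fam S :
  S \in E -> shiftable S -> #|[set U in shift_fam | x \in U]| < #|[set U in E | x \in U]|.
Proof.
move=> SE cS; have /and3P[xS iS _] := cS.
have -> : [set U in shift_fam | x \in U] = shift @: [set U in E | x \in shift U].
  apply/setP => V; rewrite inE; apply/andP/imsetP => [[/imsetP[U UE ->] xU] | [U]].
    by exists U; rewrite // inE UE.
  by rewrite inE => /andP[UE xU] ->; split => //; apply: imset_f.
rewrite card_in_imset => [|U V]; last by rewrite !inE => /andP[UE _] /andP[VE _]; apply: shift_inj.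
apply: proper_card; rewrite properE; apply/andP; split.
  by apply/subsetP => U; rewrite !inE => /andP[-> /mem_shift].
apply/subsetPn; exists S; first by rewrite inE SE.
by rewrite inE SE /shift cS !inE eqxx orbF; apply: contraNneq iS => <-.
Qed.

End Shift.

Definition shift_stable (T : finType) (x : T) (R : {set T}) (E : {set {set T}}) :=
  forall S i, S \in E -> x \in S -> i \in R :\: S -> i |: (S :\ x) \in E.

Lemma shift_stabilization (T : finType) (x : T) (R : {set T}) d (E : {set {set T}}) :
  E \subset powerset R -> union_bounded d E ->
  exists2 E' : {set {set T}}, #|E'| = #|E| /\ E' \subset powerset R &
    union_bounded d E' /\ shift_stable x R E'.
Proof.
move=> sER bdE.
pose P (E' : {set {set T}}) := [/\ #|E'| = #|E|, E' \subset powerset R & union_bounded d E'].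
have [E' [cardE' sE'R bdE'] stE'] : exists2 E', P E' & shift_stable x R E'.
  apply: (@measure_descent _ P _ (fun E' => #|[set S in E' | x \in S]|)); last by split.
  move=> E' [cardE' sE'R bdE'].
  have [stE' | ] := boolP [forall S in E', forall i in R :\: S, ~~ shiftable x i E' S].
    left => S i SE' xS iRS; move/forall_inP/(_ S SE')/forall_inP/(_ i iRS): stE'.
    by move: iRS; rewrite /shiftable xS inE => /andP[-> _] /=; rewrite negbK.
  case/forall_inPn => S SE' /forall_inPn[i iRS /negPn cS]; right; exists (shift_fam x i E').
    split; [by rewrite card_shift_fam | | exact: shift_union_bounded].
    by apply: shift_fam_sub sE'R; move: iRS; rewrite inE => /andP[].
  exact: count_shift_fam SE' cS.
by exists E'.
Qed.

Section DeletionLink.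
Variables (T : finType) (x : T).
Implicit Types (R S : {set T}) (E : {set {set T}}).

Definition deletion E := [set S in E | x \notin S].
Definition link E := [set S :\ x | S in E & x \in S].

Lemma card_deletion_link E : #|E| = #|deletion E| + #|link E|.
Proof.
rewrite card_in_imset => [|S U].
  rewrite -(cardsID [set S : {set T} | x \in S] E) addnC.
  by congr (_ + _); apply: eq_card => S; rewrite !inE andbC.
rewrite !inE => /andP[_ xS] /andP[_ xU] eSU; apply/setP => y; move/setP/(_ y): eSU.
by rewrite !inE; case: (eqVneq y x) => [-> | _]; rewrite ?xS ?xU.
Qed.

Lemma deletion_sub R E : E \subset powerset R -> deletion E \subset powerset (R :\ x).
Proof.
move/subsetP => sER; apply/subsetP => S; rewrite inE powersetE => /andP[/sER].
rewrite powersetE => sSR xS; apply/subsetP => y yS; rewrite !inE (subsetP sSR) // andbT.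
by apply: contraNneq xS => <-.
Qed.

Lemma link_sub R E : E \subset powerset R -> link E \subset powerset (R :\ x).
Proof.
move/subsetP => sER; apply/subsetP => _ /imsetP[S /[!inE] /andP[/sER] /[!powersetE] sSR _ ->].
exact: setSD.
Qed.

Lemma deletion_union_bounded d E : union_bounded d E -> union_bounded d (deletion E).
Proof. by move=> bdE S U /[!inE] /andP[SE _] /andP[UE _]; apply: bdE. Qed.

(* Two members of [E] through [x] miss some [i] of [R]; shifting one of them onto [i]
   puts both [x] and [i] into their union. *)
Lemma link_union_bounded R d E :
  x \in R -> d < #|R| -> union_bounded d E -> shift_stable x R E ->
  forall A C, A \in link E -> C \in link E -> #|A :|: C| + 2 <= d.
Proof.
move=> xR lt_dR bdE stE _ _ /imsetP[S /[!inE] /andP[SE xS] ->] /imsetP[U /[!inE] /andP[UE xU] ->].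
have [i iR iSU] : exists2 i, i \in R & i \notin S :|: U.
  apply/exists_inP; rewrite -negb_forall_in; apply: contraTN lt_dR => /forall_inP sRSU.
  by rewrite -leqNgt (leq_trans _ (bdE _ _ SE UE)) // subset_leq_card //; apply/subsetP.
move: iSU; rewrite inE negb_or => /andP[iS iU].
have U'E : i |: (U :\ x) \in E by apply: stE; rewrite // inE iU.
apply: leq_trans (bdE _ _ SE U'E); have ne_ix : i != x by apply: contraNneq iS => ->.
have <- : #|i |: (x |: (S :\ x :|: U :\ x))| = #|S :\ x :|: U :\ x| + 2.
  by rewrite !cardsU1 !inE eqxx (negbTE ne_ix) (negbTE iS) (negbTE iU) addn2.
apply: subset_leq_card; apply/subsetP => y; rewrite !inE.
case: (eqVneq y x) => [-> | _]; first by rewrite xS.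
by case: (y == i); case: (y \in S); case: (y \in U).
Qed.

End DeletionLink.

(* A family and its complements in [R] are disjoint, since [S :|: (R :\: S) = R] is too large. *)
Lemma card_union_bounded_full (T : finType) (R : {set T}) m (E : {set {set T}}) :
  #|R| = m.+1 -> E \subset powerset R -> union_bounded m E -> #|E| <= 2 ^ m.
Proof.
move=> cardR /subsetP sER bdE; pose Ec := [set R :\: S | S in E].
have compK S : S \in E -> R :\: (R :\: S) = S.
  by move/sER; rewrite powersetE => sSR; rewrite setDDr setDv set0U; apply/setIidPr.
have cardEc : #|Ec| = #|E|.
  by apply: card_in_imset => S U SE UE eSU; rewrite -(compK S) // eSU compK.
have disjE : E :&: Ec = set0.
  apply/setP => S; rewrite !inE; apply/negP => /andP[SE /imsetP[U UE eS]].
  suff : #|R| <= m by rewrite cardR ltnn.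
  apply: leq_trans (bdE _ _ SE UE); apply: subset_leq_card; rewrite eS.
  by apply/subsetP => y yR; rewrite !inE yR; case: (y \in U).
have sEEcR : E :|: Ec \subset powerset R.
  rewrite subUset; apply/andP; split; apply/subsetP => // _ /imsetP[S _ ->].
  by rewrite powersetE subsetDl.
have := subset_leq_card sEEcR; rewrite card_powerset cardR cardsU disjE cards0 subn0 cardEc.
by rewrite expnS mul2n addnn leq_double.
Qed.

Lemma card_union_bounded (T : finType) (R : {set T}) d (E : {set {set T}}) :
  d < #|R| -> E \subset powerset R -> union_bounded d E -> #|E| <= katona_bound #|R| d.
Proof.
have [m] := ubnP #|R|; elim: m R d E => // m IH R d E lt_Rm lt_dR sER bdE.
have [x xR] : exists x, x \in R by apply/set0Pn; rewrite -card_gt0 (leq_ltn_trans _ lt_dR).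
have cardR : #|R| = #|R :\ x|.+1 by rewrite (cardsD1 x) xR.
have lt_Rxm : #|R :\ x| < m by rewrite -ltnS -cardR.
have {IH}IHx d' F := IH (R :\ x) d' F lt_Rxm.
rewrite cardR; have [eq_d | ne_d] := eqVneq d #|R :\ x|.
  by subst d; rewrite katona_bound_full; apply: card_union_bounded_full cardR sER bdE.
have lt_d : d < #|R :\ x| by rewrite ltn_neqAle ne_d -ltnS -cardR.
have [E' [<- sE'R] [bdE' stE']] := shift_stabilization x sER bdE.
have delE' : #|deletion x E'| <= katona_bound #|R :\ x| d.
  by apply: IHx => //; [exact: deletion_sub | exact: deletion_union_bounded].
have linkE' := link_union_bounded xR lt_dR bdE' stE'.
rewrite (card_deletion_link x); have [le2d | lt_d2] := leqP 2 d.
  rewrite katona_boundS // leq_add //; apply: IHx; [lia | exact: link_sub |].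
  by move=> A C AE' CE'; rewrite leq_subRL // addnC; apply: linkE'.
have -> : link x E' = set0.
  by apply/setP => A; rewrite inE; apply/negP => AE'; have := linkE' _ _ AE' AE'; lia.
by rewrite cards0 addn0 !katona_bound_small in delE' *.
Qed.

Theorem theorem2 (n d r : nat) (A : {set {set 'I_n}}) :
  0 < d -> d < n -> r <= 1 -> d = r %[mod 2] ->
  VC (symd_fam A) <= d ->
  #|A| <= 2 ^ r * binom_le (n - r) d./2.
Proof.
move=> _ lt_dn le_r1 eq_dr VC_le_d.
have [D [downD <-] shD] := down_closed_compression A.
have bdD : union_bounded d D.
  by move=> S U SD UD; apply: leq_trans VC_le_d; exact/leq_VC/shD/shattered_setU.
have cardT : #|[set: 'I_n]| = n by rewrite cardsT card_ord.
rewrite -(katona_boundE n le_r1 eq_dr) -[n in katona_bound n]cardT.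
apply: card_union_bounded bdD; first by rewrite cardT.
by apply/subsetP => S _; rewrite powersetE subsetT.
Qed.
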